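(* Let $n$ be an odd positive integer, and let $\mathcal{C}_i^{(n)}$ denote the $2$-cyclotomic coset of $i$ modulo $n$. Let $i,j$ with $0\le i<j\le n-1$ be integers not belonging to the same cyclotomic coset modulo $n$. Let $g$ be a positive integer with $(2^g-1)\mid n$. Suppose there exists an integer $r$ with $0<r<2^g-1$ and $\gcd(r,2^g-1)=1$ such that both $i$ and $j$ lie in $\mathcal{C}_r^{(2^g-1)}$, i.e. $i\bmod (2^g-1)$ and $j \bmod (2^g-1)$ belong to $\{r2^k \bmod (2^g-1): k\ge 0\}$. Then the binary cyclic code of length $n$ with generator polynomial $M_i(x)\cdot M_j(x)$ has minimum distance $d\le 3$. If moreover $\gcd(n,i,j)=1$, then $d=3$.
   Context: For odd $n$, $\alpha$ denotes a primitive $n$th root of unity in an extension field of $\mathbb{F}_2$. The cyclotomic coset of $r$ modulo $N$ (over $\mathbb{F}_2$) is $\mathcal{C}_r^{(N)}=\{r2^k \bmod N: k=0,1,\dots\}$. $M_i(x)=\prod_{t\in\mathcal{C}_i^{(n)}}(x-\alpha^t)\in\mathbb{F}_2[x]$ is the minimal polynomial of $\alpha^i$. The binary cyclic code with generator polynomial $G(x)\mid x^n-1$ is $\{c(x)\in\mathbb{F}_2[x]/(x^n-1): G(x)\mid c(x)\}$. *)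

From mathcomp Require Import all_boot all_order all_algebra.
Set Implicit Arguments. Unset Strict Implicit. Unset Printing Implicit Defensive.
Import GRing.Theory.
Local Open Scope ring_scope.

(* For N >= 1 every value of the sequence (r 2^k mod N)_k already appears
   among the first N terms (pigeonhole), so this finite enumeration is
   exactly the set { r 2^k mod N : k = 0,1,... }. *)
Definition cyc_coset (N r : nat) : seq nat :=
  undup [seq (r * 2 ^ k) %% N | k <- iota 0 N]%N.

Definition minpoly_i (L : fieldType) (n : nat) (alpha : L) (i : nat) : {poly L} :=
  \prod_(t <- cyc_coset n i) ('X - (alpha ^+ t)%:P).

Definition word_poly (L : fieldType) (n : nat) (c : {ffun 'I_n -> bool}) : {poly L} :=
  \sum_(k < n | c k) 'X^k.

Definition wt (n : nat) (c : {ffun 'I_n -> bool}) : nat := #|[set k | c k]|.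

Definition cyclic_code (L : fieldType) (n : nat) (G : {poly L}) :
  {ffun 'I_n -> bool} -> bool :=
  fun c => G %| word_poly L c.

Definition is_min_dist (n : nat) (C : {ffun 'I_n -> bool} -> bool) (d : nat) : Prop :=
  (exists c, [/\ C c, c != [ffun => false] & wt c = d]) /\
  (forall c, C c -> c != [ffun => false] -> (d <= wt c)%N).

(* Let m = 2^g - 1 and A = n / m.  Then gamma = alpha^(A r) is a primitive m-th
   root of unity, and 1 + gamma, being fixed by z |-> z^(2^g), equals gamma^v for
   some 1 < v < m.  Every t in the cosets of i and j is r 2^e modulo m, so alpha^t
   is a root of 1 + x^A + x^(A v): in characteristic 2,
   1 + gamma^(2^e) + (1 + gamma)^(2^e) = 0.  This word of weight 3 is therefore a
   codeword.  Conversely, a word x^a + x^b vanishing at alpha^i and alpha^j gives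
   n | i (b - a) and n | j (b - a), hence n | b - a when gcd (n, i, j) = 1. *)
From mathcomp Require Import all_boot all_order all_algebra.
From mathcomp Require Import cyclic.
Set Implicit Arguments. Unset Strict Implicit. Unset Printing Implicit Defensive.
Import GRing.Theory.

Lemma cyc_cosetP N r x : x \in cyc_coset N r -> exists k, x = r * 2 ^ k %% N.
Proof. by rewrite mem_undup => /mapP [k _ ->]; exists k. Qed.

Lemma mem_cyc_coset N r k : k < N -> r * 2 ^ k %% N \in cyc_coset N r.
Proof. by move=> ltkN; rewrite mem_undup; apply/mapP; exists k; rewrite ?mem_iota. Qed.

Lemma totient_leq n : totient n <= n.
Proof.
rewrite totient_count_coprime -[X in _ <= X]subn0 -[X in _ <= X]muln1.
by rewrite -sum_nat_const_nat; apply: leq_sum => d _; apply: leq_b1.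
Qed.

Lemma expn2_mod_totient N k : odd N -> 2 ^ k = 2 ^ (k %% totient N) %[mod N].
Proof.
move=> oddN; have e : 2 ^ totient N = 1 %[mod N].
  by apply: Euler_exp_totient; rewrite coprime2n.
rewrite {1}(divn_eq k (totient N)) expnD [_ * totient N]mulnC expnM.
by rewrite -modnMml -modnXm e modnXm exp1n modnMml mul1n.
Qed.

Lemma mem_cyc_coset_odd N r k : odd N -> r * 2 ^ k %% N \in cyc_coset N r.
Proof.
move=> oddN; have N_gt0 : 0 < N by case: N oddN.
rewrite -modnMmr expn2_mod_totient // modnMmr; apply: mem_cyc_coset.
by apply: leq_trans (totient_leq N); rewrite ltn_mod totient_gt0.
Qed.

Lemma cyc_coset_trans N r x y : odd N ->
  x \in cyc_coset N r -> y \in cyc_coset N x -> y \in cyc_coset N r.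
Proof.
move=> oddN /cyc_cosetP [a ->] /cyc_cosetP [b ->].
by rewrite modnMml -mulnA -expnD mem_cyc_coset_odd.
Qed.

Lemma cyc_coset_sym N r x : odd N -> r < N ->
  x \in cyc_coset N r -> r \in cyc_coset N x.
Proof.
move=> oddN ltrN /cyc_cosetP [a ->].
have N_gt0 : 0 < N by case: N oddN ltrN.
have T_gt0 : 0 < totient N by rewrite totient_gt0.
have e : r = (r * 2 ^ a %% N) * 2 ^ (a * totient N - a) %% N.
  rewrite modnMml -mulnA -expnD subnKC ?leq_pmulr // -modnMmr expn2_mod_totient //.
  by rewrite modnMl expn0 modnMmr muln1 modn_small.
by rewrite {1}e mem_cyc_coset_odd.
Qed.

Lemma cyc_coset_modn N m i r t : m %| N -> i %% m \in cyc_coset m r ->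
  t \in cyc_coset N i -> exists e, t %% m = r * 2 ^ e %% m.
Proof.
move=> dvd_mN /cyc_cosetP [a Ea] /cyc_cosetP [k ->]; exists (a + k).
by rewrite modn_dvdm // -modnMml Ea modnMml expnD mulnA.
Qed.

Lemma dvdn_gcd3_mul n i j d : n %| i * d -> n %| j * d -> n %| gcdn (gcdn n i) j * d.
Proof. by move=> dvd_i dvd_j; rewrite !muln_gcdl !dvdn_gcd dvdn_mulr // dvd_i dvd_j. Qed.

Lemma is_min_dist_exists n (C : {ffun 'I_n -> bool} -> bool) c :
  C c -> c != [ffun => false] -> exists2 d, is_min_dist C d & d <= wt c.
Proof.
move=> Cc c_nz.
pose P k := [exists c', [&& C c', c' != [ffun => false] & wt c' == k]].
have [|d Pd d_min] := ex_minnP (ex_intro P (wt c) _).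
  by apply/existsP; exists c; rewrite Cc c_nz eqxx.
exists d; last by apply: d_min; apply/existsP; exists c; rewrite Cc c_nz eqxx.
split; first by have /existsP [c' /and3P [? ? /eqP ?]] := Pd; exists c'.
by move=> c' Cc' c'_nz; apply: d_min; apply/existsP; exists c'; rewrite Cc' c'_nz eqxx.
Qed.

Local Open Scope ring_scope.

Section CharTwo.

Variables (L : fieldType) (pL : 2%N \in [pchar L]).

Lemma exprD_pow2 (x y : L) e : (x + y) ^+ (2 ^ e) = x ^+ (2 ^ e) + y ^+ (2 ^ e).
Proof. by apply: exprDn_pchar; rewrite pnatX (pnatE _ (isT : prime 2)) pL. Qed.

Lemma add1_prim_root_exp g (z : L) : (1 < 2 ^ g - 1)%N -> (2 ^ g - 1).-primitive_root z ->
  exists2 v, (1 < v < 2 ^ g - 1)%N & 1 + z = z ^+ v.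
Proof.
set m := (2 ^ g - 1)%N => m_gt1 prim_z.
have z_neq0 : z != 0 by rewrite (prim_root_eq0 prim_z) -lt0n ltnW.
have z_neq1 : z != 1.
  apply/eqP=> z1; move: m_gt1.
  by have := prim_order_dvd prim_z 1; rewrite expr1 z1 eqxx dvdn1 => /eqP ->.
have z1_neq0 : 1 + z != 0.
  by rewrite addr_eq0 oppr_pchar2 // eq_sym.
have : (1 + z) ^+ m = 1.
  have : (1 + z) ^+ (2 ^ g) = 1 + z.
    by rewrite exprD_pow2 expr1n -(subnK (expn_gt0 2 g)) addn1 exprS prim_expr_order ?mulr1.
  by rewrite -(subnK (expn_gt0 2 g)) addn1 exprS -[RHS]mulr1 => /(mulfI z1_neq0).
case/(prim_rootP prim_z) => v Ev; exists v => //; rewrite ltn_ord andbT.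
case: v Ev => [[|[|v]] //= _]; rewrite ?expr0 ?expr1.
- by rewrite -[RHS]addr0 => /addrI /eqP; rewrite (negbTE z_neq0).
- by rewrite -[RHS]add0r => /addIr /eqP; rewrite oner_eq0.
Qed.

Lemma root_trinomial (beta : L) m r v t e : m.-primitive_root beta ->
  1 + beta ^+ r = (beta ^+ r) ^+ v -> (t %% m = r * 2 ^ e %% m)%N ->
  1 + beta ^+ t + beta ^+ (t * v) = 0.
Proof.
move=> prim_beta Ev Et; rewrite exprM.
have -> : beta ^+ t = (beta ^+ r) ^+ (2 ^ e).
  by rewrite -exprM -(prim_expr_mod prim_beta) Et prim_expr_mod.
by rewrite [_ ^+ v]exprAC -Ev exprD_pow2 expr1n addrr_pchar2.
Qed.

Variables (n : nat) (alpha : L).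
Hypothesis prim_alpha : n.-primitive_root alpha.

Lemma horner_word_poly (c : {ffun 'I_n -> bool}) x :
  (word_poly L c).[x] = \sum_(k in [set k | c k]) x ^+ k.
Proof.
rewrite /word_poly horner_sum; apply: eq_big => k; first by rewrite inE.
by rewrite hornerXn.
Qed.

Lemma root_minpoly_i i : (i < n)%N -> root (minpoly_i n alpha i) (alpha ^+ i).
Proof.
move=> ltin; rewrite /minpoly_i -(big_map (fun t => alpha ^+ t) xpredT (fun x => 'X - x%:P)).
rewrite root_prod_XsubC; apply/mapP; exists i => //.
by have := @mem_cyc_coset n i 0 (leq_ltn_trans (leq0n i) ltin); rewrite muln1 modn_small.
Qed.

Lemma dvdp_minpoly_i_mul i j (p : {poly L}) : odd n -> (j < n)%N ->
  j \notin cyc_coset n i ->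
  {in cyc_coset n i ++ cyc_coset n j, forall t, root p (alpha ^+ t)} ->
  minpoly_i n alpha i * minpoly_i n alpha j %| p.
Proof.
move=> odd_n ltjn j_notin roots_p; rewrite /minpoly_i -big_cat.
set s := cyc_coset n i ++ cyc_coset n j.
rewrite -(big_map (fun t => alpha ^+ t) xpredT (fun x => 'X - x%:P)).
have s_lt t : t \in s -> (t < n)%N.
  by rewrite mem_cat => /orP [] /cyc_cosetP [k ->]; rewrite ltn_mod (prim_order_gt0 prim_alpha).
have uniq_s : uniq s.
  rewrite cat_uniq !undup_uniq andbT /=; apply/hasPn => t tj; apply/negP => ti.
  by rewrite (cyc_coset_trans odd_n ti (cyc_coset_sym odd_n ltjn tj)) in j_notin.
have roots_s : all (root p) [seq alpha ^+ t | t <- s].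
  by apply/allP => _ /mapP [t ts ->]; apply: roots_p.
have [|q ->] := uniq_roots_prod_XsubC roots_s; last exact: dvdp_mulIr.
rewrite uniq_rootsE map_inj_in_uniq // => t1 t2 t1s t2s /eqP.
by rewrite (eq_prim_root_expr prim_alpha) !modn_small ?s_lt // => /eqP.
Qed.

Lemma wt_gt2_of_roots i j (c : {ffun 'I_n -> bool}) : gcdn (gcdn n i) j = 1%N ->
  root (word_poly L c) (alpha ^+ i) -> root (word_poly L c) (alpha ^+ j) ->
  c != [ffun => false] -> (2 < wt c)%N.
Proof.
move=> gcd1 root_i root_j c_nz; have alpha_nz : alpha != 0.
  by rewrite (prim_root_eq0 prim_alpha) -lt0n (prim_order_gt0 prim_alpha).
rewrite /wt ltnNge; apply/negP; set S := [set k | c k].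
case E: #|S| => [|[|[|//]]] _.
- case/negP: c_nz; apply/eqP/ffunP => k; rewrite ffunE; apply/negbTE.
  by have := cards0_eq E; move/setP/(_ k); rewrite !inE => ->.
- move/eqP/cards1P: E => [a Sa]; move: root_i.
  by rewrite /root horner_word_poly -/S Sa big_set1 -exprM expf_eq0 (negbTE alpha_nz) andbF.
move/eqP/cards2P: E => [a [b [neq_ab Sab]]].
wlog lt_ab : a b neq_ab Sab / (a < b)%N.
  move=> wlog; case: (ltngtP a b) => [|lt_ba|/val_inj eq_ab]; first exact: wlog.
    by apply: (wlog b a); rewrite 1?eq_sym // Sab setUC.
  by rewrite eq_ab eqxx in neq_ab.
have dvd_diff t : root (word_poly L c) (alpha ^+ t) -> (n %| t * (b - a))%N.
  rewrite /root horner_word_poly -/S Sab big_setU1 ?inE // big_set1 /=.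
  rewrite addr_eq0 oppr_pchar2 // -!exprM (eq_prim_root_expr prim_alpha) eq_sym.
  by rewrite eqn_mod_dvd ?leq_mul2l ?(ltnW lt_ab) ?orbT // mulnBr.
have := dvdn_gcd3_mul (dvd_diff _ root_i) (dvd_diff _ root_j).
rewrite gcd1 mul1n => /dvdn_leq; rewrite subn_gt0 lt_ab => /(_ isT).
by rewrite leqNgt (leq_ltn_trans (leq_subr a b)).
Qed.

Lemma minpoly_i_mul_wt3_codeword i j g r : odd n -> (j < n)%N ->
  j \notin cyc_coset n i -> (1 < 2 ^ g - 1)%N -> (2 ^ g - 1 %| n)%N ->
  coprime r (2 ^ g - 1) ->
  (i %% (2 ^ g - 1))%N \in cyc_coset (2 ^ g - 1) r ->
  (j %% (2 ^ g - 1))%N \in cyc_coset (2 ^ g - 1) r ->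
  exists c : {ffun 'I_n -> bool}, [/\ cyclic_code (minpoly_i n alpha i * minpoly_i n alpha j) c,
               c != [ffun => false] & wt c = 3%N].
Proof.
set m := (2 ^ g - 1)%N => odd_n ltjn j_notin m_gt1 dvd_mn cop_rm coset_i coset_j.
set A := (n %/ m)%N; set beta := alpha ^+ A.
have prim_beta : m.-primitive_root beta by apply: dvdn_prim_root.
have prim_gam : m.-primitive_root (beta ^+ r) by rewrite prim_root_exp_coprime.
have [v /andP [v_gt1 v_lt_m] Ev] := add1_prim_root_exp m_gt1 prim_gam.
have n_gt0 := prim_order_gt0 prim_alpha.
have n_eq : n = (A * m)%N := esym (divnK dvd_mn).
have A_gt0 : (0 < A)%N by move: n_gt0; rewrite n_eq muln_gt0 => /andP [].
have lt_A_Av : (A < A * v)%N by rewrite ltn_Pmulr.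
have lt_Av_n : (A * v < n)%N by rewrite n_eq ltn_pmul2l.
pose k0 : 'I_n := Ordinal n_gt0; pose kA : 'I_n := Ordinal (ltn_trans lt_A_Av lt_Av_n).
pose kAv : 'I_n := Ordinal lt_Av_n; pose S := k0 |: [set kA; kAv].
have kA_neq : kA != kAv.
  by apply/eqP => /(congr1 val) /= eqA; have := lt_A_Av; rewrite {1}eqA ltnn.
have k0_notin : k0 \notin [set kA; kAv].
  rewrite !inE negb_or; apply/andP; split; apply/eqP => /(congr1 val) /= eq0.
    by have := A_gt0; rewrite -eq0.
  by have := ltn_trans A_gt0 lt_A_Av; rewrite -eq0.
have suppS : [set k | [ffun k => k \in S] k] = S by apply/setP => k; rewrite inE ffunE.
exists [ffun k => k \in S]; split.
- apply: dvdp_minpoly_i_mul odd_n ltjn j_notin _ => t t_in.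
  have [e Et] : exists e, (t %% m = r * 2 ^ e %% m)%N.
    by move: t_in; rewrite mem_cat => /orP [] t_in; apply: cyc_coset_modn t_in.
  rewrite /root horner_word_poly suppS /S big_setU1 // big_setU1 ?inE // big_set1 /=.
  have -> : alpha ^+ t ^+ A = beta ^+ t by rewrite -exprM mulnC exprM.
  have -> : alpha ^+ t ^+ (A * v) = beta ^+ (t * v) by rewrite -exprM mulnCA exprM.
  by rewrite expr0 addrA (root_trinomial prim_beta Ev Et).
- by apply/negP => /eqP /ffunP /(_ k0); rewrite !ffunE !inE eqxx.
- by rewrite /wt suppS /S cardsU1 k0_notin cards2 kA_neq.
Qed.

End CharTwo.

Theorem lemma2 (L : fieldType) (pL : (2 \in [pchar L])%N)
    (n : nat) (alpha : L) (i j g r : nat) :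
  odd n -> n.-primitive_root alpha ->
  (i < j)%N -> (j <= n - 1)%N ->
  j \notin cyc_coset n i ->
  (0 < g)%N -> (2 ^ g - 1 %| n)%N ->
  (0 < r)%N -> (r < 2 ^ g - 1)%N -> coprime r (2 ^ g - 1) ->
  (i %% (2 ^ g - 1))%N \in cyc_coset (2 ^ g - 1) r ->
  (j %% (2 ^ g - 1))%N \in cyc_coset (2 ^ g - 1) r ->
  exists d : nat,
    is_min_dist (@cyclic_code L n (minpoly_i n alpha i * minpoly_i n alpha j)) d
    /\ (d <= 3)%N
    /\ (gcdn (gcdn n i) j = 1%N -> d = 3%N).
Proof.
move=> odd_n prim_alpha lt_ij le_jn j_notin _ dvd_mn r_gt0 lt_rm cop_rm coset_i coset_j.
have ltjn : (j < n)%N.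
  by apply: leq_ltn_trans le_jn _; rewrite subn1 ltn_predL (prim_order_gt0 prim_alpha).
have m_gt1 : (1 < 2 ^ g - 1)%N := leq_ltn_trans r_gt0 lt_rm.
have [c [code_c c_nz wt_c]] :=
  minpoly_i_mul_wt3_codeword pL prim_alpha odd_n ltjn j_notin m_gt1 dvd_mn cop_rm coset_i coset_j.
have [d min_d le_d3] := is_min_dist_exists code_c c_nz.
exists d; split=> //; rewrite wt_c in le_d3; split=> // gcd1.
apply/eqP; rewrite eqn_leq le_d3 /=; case: min_d => [[c' [code_c' c'_nz <-]] _].
have root_c' k : (k < n)%N -> minpoly_i n alpha k %| word_poly L c' ->
    root (word_poly L c') (alpha ^+ k).
  by move=> ltkn /root_dvdp; apply; apply: root_minpoly_i.
apply: (wt_gt2_of_roots pL prim_alpha gcd1 _ _ c'_nz); apply: root_c'.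
- exact: ltn_trans lt_ij ltjn.
- exact: dvdp_trans (dvdp_mulIl _ _) code_c'.
- exact: ltjn.
- exact: dvdp_trans (dvdp_mulIr _ _) code_c'.
Qed.
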